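(* Let $A,B\in\mathbb{R}^{m\times n}$ and $b\in\mathbb{R}^m$ with $\operatorname{rank}(B) = m$ and $m<n$, and let $1\le p\le\infty$. If $B^\dagger b\leq0$, $B^\dagger A\geq0$ and $\|B^\dagger A\|_p<1$, then the equation $Ax-B|x|=b$ has at least one nonnegative solution.
   Context: $B^\dagger$ is the Moore–Penrose inverse; $|x|$ is the entrywise absolute value; vector/matrix inequalities are entrywise; $\|\cdot\|_p$ on matrices is the operator norm induced by the vector $p$-norm. *)

From HB Require Import structures.
From mathcomp Require Import all_boot all_order all_algebra.
From mathcomp Require Import all_classical all_reals.
From mathcomp Require Import ereal exp.
Set Implicit Arguments. Unset Strict Implicit. Unset Printing Implicit Defensive.
Import Order.TTheory GRing.Theory Num.Theory.
Local Open Scope ring_scope.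

Definition is_MP_inverse (R : realType) (m n : nat)
  (B : 'M[R]_(m, n)) (X : 'M[R]_(n, m)) : Prop :=
  [/\ B *m X *m B = B, X *m B *m X = X,
      (B *m X)^T = B *m X & (X *m B)^T = X *m B].

Definition mabs (R : realType) (m n : nat) (M : 'M[R]_(m, n)) : 'M[R]_(m, n) :=
  map_mx (fun t => `|t|) M.

Definition vnorm (R : realType) (k : nat) (p : \bar R) (x : 'cV[R]_k) : R :=
  match p with
  | EFin r => (\sum_(i < k) `|x i 0| `^ r) `^ r^-1
  | +oo%E => \big[Num.max/0]_(i < k) `|x i 0|
  | -oo%E => 0
  end.

Definition opnorm (R : realType) (m n : nat) (p : \bar R) (M : 'M[R]_(m, n)) : R :=
  sup [set vnorm p (M *m x) | x in [set x : 'cV[R]_n | vnorm p x <= 1]].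

From HB Require Import structures.
From mathcomp Require Import all_boot all_order all_algebra.
From mathcomp Require Import all_classical all_reals.
From mathcomp Require Import ereal exp.
Import Order.TTheory GRing.Theory Num.Theory.
Local Open Scope ring_scope.
Set Implicit Arguments. Unset Strict Implicit.

(* Put M := B^+ A >= 0 and c := - B^+ b >= 0.  A nonnegative M of operator
   norm < 1 admits no nonzero u >= 0 with u <= M u (normalise u and compare
   norms).  Applied to u = |z| for z = M z this makes 1 - M invertible, and
   applied to u = max(0, -x) it shows that the fixed point x = M x + c is
   nonnegative.  As B has full row rank, B B^+ = 1, so B x = A x - b, and
   x = |x| is a solution. *)

Section VectorNorm.

Variables (R : realType) (p : \bar R).
Hypothesis p_gt0 : (0 < p)%E.

Lemma vnorm_le k (u v : 'cV[R]_k) :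
  (forall i, `|u i 0| <= `|v i 0|) -> vnorm p u <= vnorm p v.
Proof.
case: p p_gt0 => [r| |] //; rewrite ?lte_fin => r_gt0 uv /=.
- have sum_ge0 (w : 'cV[R]_k) : 0 <= \sum_i `|w i 0| `^ r.
    by apply: sumr_ge0 => i _; apply: powR_ge0.
  apply: ge0_ler_powR; rewrite ?nnegrE ?invr_ge0 ?(ltW r_gt0) ?sum_ge0 //.
  by apply: ler_sum => i _; apply: ge0_ler_powR; rewrite ?nnegrE ?(ltW r_gt0).
- by apply: le_bigmax2 => i _; apply: uv.
Qed.

Lemma norm_coord_le_vnorm k (x : 'cV[R]_k) j : `|x j 0| <= vnorm p x.
Proof.
case: p p_gt0 => [r| |] //; rewrite ?lte_fin => r_gt0 /=.
- rewrite -[leLHS](powRr1 (normr_ge0 _)) -(mulfV (lt0r_neq0 r_gt0)) powRrM.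
  apply: ge0_ler_powR; rewrite ?nnegrE ?invr_ge0 ?(ltW r_gt0) ?powR_ge0 //.
    by apply: sumr_ge0 => i _; apply: powR_ge0.
  by rewrite (bigD1 j) //= lerDl; apply: sumr_ge0 => i _; apply: powR_ge0.
- exact: (le_bigmax 0 (fun i => `|x i 0|) j).
Qed.

Lemma vnormZ k (x : 'cV[R]_k) t : 0 <= t -> vnorm p (t *: x) = t * vnorm p x.
Proof.
case: p p_gt0 => [r| |] //; rewrite ?lte_fin => r_gt0 t_ge0 /=.
- under eq_bigr => i _ do rewrite mxE normrM (ger0_norm t_ge0) powRM //.
  rewrite -mulr_sumr powRM ?powR_ge0 //; last first.
    by apply: sumr_ge0 => i _; apply: powR_ge0.
  by rewrite -powRrM mulfV ?gt_eqF // powRr1.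
- apply: (big_rec2 (fun a b => a = t * b)); first by rewrite mulr0.
  by move=> i a b _ ->; rewrite mxE normrM (ger0_norm t_ge0) maxr_pMr.
Qed.

Lemma vnorm_mulmx_le_opnorm m n (M : 'M[R]_(m, n)) (w : 'cV[R]_n) :
  vnorm p w <= 1 -> vnorm p (M *m w) <= opnorm p M.
Proof.
move=> w_le1; apply: sup_upper_bound; last by exists w.
split; first by exists (vnorm p (M *m w)), w.
exists (vnorm p (\col_i \sum_j `|M i j|)) => _ [x x_le1 <-].
apply: vnorm_le => i; rewrite !mxE [leRHS]ger0_norm ?sumr_ge0 //.
apply: le_trans (ler_norm_sum _ _ _) (ler_sum _ _) => j _.
rewrite normrM ler_piMr //.
exact: le_trans (norm_coord_le_vnorm x j) x_le1.
Qed.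

End VectorNorm.

Section NonnegativeContraction.

Variables (R : realType) (p : \bar R) (n : nat) (M : 'M[R]_n).
Hypotheses (p_gt0 : (0 < p)%E) (M_ge0 : forall i j, 0 <= M i j)
  (M_contr : opnorm p M < 1).

Lemma subinvariant_ge0_eq0 (u : 'cV[R]_n) :
  (forall i, 0 <= u i 0) -> (forall i, u i 0 <= (M *m u) i 0) -> u = 0.
Proof.
move=> u_ge0 u_le_Mu; apply/matrixP => i j; rewrite ord1 mxE.
apply/eqP; rewrite -normr_le0.
apply: le_trans (norm_coord_le_vnorm p_gt0 u i) _; rewrite leNgt.
apply/negP => s_gt0; set s := vnorm p u in s_gt0.
have s_inv_ge0 : 0 <= s^-1 by rewrite invr_ge0 ltW.
have w_norm : vnorm p (s^-1 *: u) = 1 by rewrite vnormZ // mulVf ?gt_eqF.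
have w_le_Mw : vnorm p (s^-1 *: u) <= vnorm p (M *m (s^-1 *: u)).
  apply: vnorm_le => // a; rewrite -scalemxAr !mxE.
  have := u_le_Mu a; rewrite !mxE => ua_le.
  have Mua_ge0 := le_trans (u_ge0 a) ua_le.
  by rewrite !ger0_norm ?mulr_ge0 // ler_wpM2l.
have w_le1 : vnorm p (s^-1 *: u) <= 1 by rewrite w_norm.
have := le_trans w_le_Mw (vnorm_mulmx_le_opnorm p_gt0 M w_le1).
by move=> /le_lt_trans/(_ M_contr); rewrite w_norm ltxx.
Qed.

Lemma norm_mulmx_le (z : 'cV[R]_n) i : `|(M *m z) i 0| <= (M *m mabs z) i 0.
Proof.
rewrite !mxE; apply: le_trans (ler_norm_sum _ _ _) (ler_sum _ _) => j _.
by rewrite normrM mxE ger0_norm.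
Qed.

Lemma unitmx_1_sub_contraction : 1%:M - M \in unitmx.
Proof.
have ker0 (z : 'cV[R]_n) : (1%:M - M) *m z = 0 -> z = 0.
  move=> /eqP; rewrite mulmxBl mul1mx subr_eq0 => /eqP z_fix.
  have /matrixP abs0 : mabs z = 0.
    apply: subinvariant_ge0_eq0 => i; first by rewrite mxE.
    by rewrite [leLHS]mxE {1}z_fix norm_mulmx_le.
  by apply/matrixP => i j; have := abs0 i j; rewrite !mxE => /normr0_eq0.
rewrite unitmxE unitfE -det_tr; apply/det0P => -[v /eqP v_neq0 vN0].
apply: v_neq0; apply: trmx_inj; rewrite trmx0; apply: ker0.
by rewrite -[1%:M - M]trmxK -trmx_mul vN0 trmx0.
Qed.

Lemma fixpoint_ge0 (x c : 'cV[R]_n) :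
  (forall i, 0 <= c i 0) -> x = M *m x + c -> forall i j, 0 <= x i j.
Proof.
move=> c_ge0 x_fix.
pose u : 'cV[R]_n := \col_i Num.max 0 (- x i 0).
have u_ge0 i : 0 <= u i 0 by rewrite mxE le_max lexx.
have neg_x_le_u i : - x i 0 <= u i 0 by rewrite mxE le_max lexx orbT.
have u0 : u = 0.
  apply: subinvariant_ge0_eq0 => // i.
  rewrite [leLHS]mxE ge_max; apply/andP; split.
    by rewrite mxE; apply: sumr_ge0 => j _; rewrite mulr_ge0.
  rewrite x_fix !mxE opprD -sumrN lerBlDr -[leLHS]addr0 lerD //.
  by apply: ler_sum => j _; rewrite -mulrN ler_wpM2l.
move=> i j; rewrite ord1 -oppr_le0.
by have := neg_x_le_u i; rewrite u0 mxE.
Qed.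

Lemma exists_fixpoint_ge0 (c : 'cV[R]_n) :
  (forall i, 0 <= c i 0) ->
  exists x : 'cV[R]_n, (forall i j, 0 <= x i j) /\ x = M *m x + c.
Proof.
move=> c_ge0; set x := invmx (1%:M - M) *m c.
have Nx : (1%:M - M) *m x = c.
  by rewrite mulmxA mulmxV ?mul1mx ?unitmx_1_sub_contraction.
have x_fix : x = M *m x + c by rewrite -Nx mulmxBl mul1mx addrC subrK.
by exists x; split=> //; apply: fixpoint_ge0 x_fix.
Qed.

End NonnegativeContraction.

Lemma mulmx_full_row_rank_pinv (F : fieldType) m n
    (B : 'M[F]_(m, n)) (X : 'M[F]_(n, m)) :
  \rank B = m -> B *m X *m B = B -> B *m X = 1%:M.
Proof.
move=> rankB BXB; apply/eqP; rewrite -subr_eq0.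
rewrite -(mulmx_free_eq0 _ (_ : row_free B)) ?/row_free ?rankB //.
by rewrite mulmxBl BXB mul1mx subrr.
Qed.

Theorem corollary3p5 (R : realType) (m n : nat)
  (A B : 'M[R]_(m, n)) (b : 'cV[R]_m) (p : \bar R) (Bdag : 'M[R]_(n, m)) :
  \rank B = m -> (m < n)%N -> (1 <= p)%E ->
  is_MP_inverse B Bdag ->
  (forall i j, (Bdag *m b) i j <= 0) ->
  (forall i j, 0 <= (Bdag *m A) i j) ->
  opnorm p (Bdag *m A) < 1 ->
  exists x : 'cV[R]_n, (forall i j, 0 <= x i j) /\ A *m x - B *m mabs x = b.
Proof.
move=> rankB _ p_ge1 [BXB _ _ _] Bdag_b_le0 M_ge0 M_contr.
have BBdag : B *m Bdag = 1%:M by apply: mulmx_full_row_rank_pinv.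
have p_gt0 : (0 < p)%E by apply: lt_le_trans p_ge1.
have c_ge0 i : 0 <= (- (Bdag *m b)) i 0 by rewrite mxE oppr_ge0 Bdag_b_le0.
have [x [x_ge0 x_fix]] := exists_fixpoint_ge0 p_gt0 M_ge0 M_contr c_ge0.
exists x; split => //.
have -> : mabs x = x by apply/matrixP => i j; rewrite mxE ger0_norm.
have Bx : B *m x = A *m x - b.
  by rewrite {1}x_fix mulmxDr mulmxN !mulmxA BBdag !mul1mx.
by rewrite Bx opprB addrC subrK.
Qed.
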